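(* Let $\mathbf{A}\in\mathbb{R}^{n\times d}$ and $\mathbf{B}\in\mathbb{R}^{n\times d_B}$. For each integer $k\in[0,\mathrm{rank}(\mathbf{B})]$, $$P_k(x;\mathbf{A},\mathbf{B})=\frac{(-1)^k}{(d_B-k)!}\partial_y^{d_B-k}\det\left[\begin{pmatrix}x\mathbf{I}_d&\mathbf{0}\\ \mathbf{0}&y\mathbf{I}_{d_B}\end{pmatrix}-\begin{pmatrix}\mathbf{A}^{\rm T}\\ \mathbf{B}^{\rm T}\end{pmatrix}\begin{pmatrix}\mathbf{A}&\mathbf{B}\end{pmatrix}\right]\Bigg|_{y=0}$$ and $$P_k(x;\mathbf{A},\mathbf{B})=\frac{(-1)^k}{k!}x^{d-n+k}\,\partial_y^k\det[x\mathbf{I}_n-\mathbf{A}\mathbf{A}^{\rm T}-y\mathbf{B}\mathbf{B}^{\rm T}]\Big|_{y=0}.$$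
   Context: $\mathbf{B}_{:,S}$ is the column submatrix of $\mathbf{B}$ indexed by $S$, $\mathbf{M}^\dagger$ is the Moore–Penrose pseudoinverse with $\mathbf{B}_{:,S}^\dagger:=(\mathbf{B}_{:,S})^\dagger$; empty determinants equal $1$ and $\mathbf{B}_{:,\emptyset}\mathbf{B}_{:,\emptyset}^\dagger$ is the zero matrix. Define $$P_k(x;\mathbf{A},\mathbf{B})=\sum_{S\subset[d_B],|S|=k}\det[(\mathbf{B}_{:,S})^{\rm T}\mathbf{B}_{:,S}]\det[x\mathbf{I}_d-\mathbf{A}^{\rm T}(\mathbf{I}_n-\mathbf{B}_{:,S}\mathbf{B}_{:,S}^\dagger)\mathbf{A}].$$ *)

From Stdlib Require Import ClassicalEpsilon.
From HB Require Import structures.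
From mathcomp Require Import all_boot all_order all_algebra.
From mathcomp Require Import reals.
Set Implicit Arguments. Unset Strict Implicit. Unset Printing Implicit Defensive.
Import Order.TTheory GRing.Theory Num.Theory.
Local Open Scope ring_scope.

(* The four Penrose conditions characterising the Moore--Penrose pseudoinverse
   (over the reals the adjoint is the transpose). *)
Definition penrose {R : realType} {m n : nat}
  (M : 'M[R]_(m, n)) (X : 'M[R]_(n, m)) : Prop :=
  [/\ M *m X *m M = M, X *m M *m X = X,
      (M *m X)^T = M *m X & (X *m M)^T = X *m M].

Definition mp_pinv {R : realType} {m n : nat} (M : 'M[R]_(m, n)) : 'M[R]_(n, m) :=
  epsilon (inhabits 0) (penrose M).

(* Column submatrix B_{:,S}, columns taken in increasing order of index. *)
Definition colS {R : realType} {n dB : nat} (B : 'M[R]_(n, dB)) (S : {set 'I_dB})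
  : 'M[R]_(n, #|S|) :=
  colsub (fun i : 'I_#|S| => enum_val i) B.

Definition Pk {R : realType} {n d dB : nat} (k : nat)
  (A : 'M[R]_(n, d)) (B : 'M[R]_(n, dB)) (x : R) : R :=
  \sum_(S : {set 'I_dB} | #|S| == k)
     \det ((colS B S)^T *m colS B S) *
     \det (x%:M - A^T *m (1%:M - colS B S *m mp_pinv (colS B S)) *m A).

Definition detBlockY {R : realType} {n d dB : nat}
  (A : 'M[R]_(n, d)) (B : 'M[R]_(n, dB)) (x : R) : {poly R} :=
  \det (block_mx (x%:P)%:M 0 0 ('X)%:M
        - map_mx polyC (col_mx A^T B^T *m row_mx A B)).

Definition detNY {R : realType} {n d dB : nat}
  (A : 'M[R]_(n, d)) (B : 'M[R]_(n, dB)) (x : R) : {poly R} :=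
  \det (map_mx polyC (x%:M - A *m A^T) - 'X *: map_mx polyC (B *m B^T)).

(* Let N = diag(x I_d, 0) - [A B]^T [A B]. Its principal submatrix on the
   indices [d] ∪ (d + S) is the same matrix built from B_{:,S}, whose
   lower-right block is -B_S^T B_S; the Schur complement of that block shows
   that its determinant is (-1)^|S| times the S-summand of P_k (both vanish
   when B_S has dependent columns). Both determinants of the statement have
   the form det(diag(I_d, a I) N + diag(0, b I)) -- the second one after
   Sylvester's identity x^(d+d_B) det(x I_n - C D) = x^n det(x I - D C) with
   C = [A B] and D = [A^T; y B^T] -- and expanding such a determinant row by
   row over the last d_B rows gives sum_S a^|S| b^(d_B-|S|) times these
   principal minors. Each side of the statement is one coefficient in y. *)

From Stdlib Require Import ClassicalEpsilon.
From HB Require Import structures.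
From mathcomp Require Import all_boot all_order all_algebra perm.
From mathcomp Require Import reals zify.
Set Implicit Arguments. Unset Strict Implicit. Unset Printing Implicit Defensive.
Import Order.TTheory GRing.Theory Num.Theory.
Local Open Scope ring_scope.

Lemma codom_enum_val (U : finType) (A : {set U}) : codom (enum_val : 'I_#|A| -> U) =i A.
Proof.
move=> y; apply/codomP/idP => [[i ->]|yA]; first exact: enum_valP.
by exists (enum_rank_in yA y); rewrite enum_rankK_in.
Qed.

Lemma split_lshift m n (i : 'I_m) : split (lshift n i) = inl i.
Proof. exact: (unsplitK (inl i)). Qed.

Lemma split_rshift m n (i : 'I_n) : split (rshift m i) = inr i.
Proof. exact: (unsplitK (inr i)). Qed.

Definition pad_left d m (S : {set 'I_m}) : {set 'I_(d + m)} :=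
  [set i | if split i is inr k then k \in S else true].

Definition pad_left_enum d m (S : {set 'I_m}) (i : 'I_(d + #|S|)) : 'I_(d + m) :=
  match split i with inl j => lshift m j | inr k => rshift d (enum_val k) end.

Lemma pad_left_enum_inj d m (S : {set 'I_m}) : injective (@pad_left_enum d m S).
Proof.
rewrite /pad_left_enum => i j; case: split_ordP => i' ->; case: split_ordP => j' -> //.
- by move/lshift_inj ->.
- by move/eqP; rewrite eq_lrshift.
- by move/eqP; rewrite eq_rlshift.
- by move/rshift_inj/enum_val_inj ->.
Qed.

Lemma codom_pad_left_enum d m (S : {set 'I_m}) : codom (@pad_left_enum d m S) =i pad_left d S.
Proof.
move=> y; rewrite inE; apply/codomP/idP.
  case=> i ->; case: (split_ordP i) => [j ->|k ->]; rewrite /pad_left_enum.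
    by rewrite !split_lshift.
  by rewrite !split_rshift enum_valP.
case: (split_ordP y) => [j ->|k -> kS].
  by exists (lshift #|S| j); rewrite /pad_left_enum split_lshift.
by exists (rshift d (enum_rank_in kS k)); rewrite /pad_left_enum split_rshift enum_rankK_in.
Qed.

Section PrincipalMinors.
Variable T : comNzRingType.

Lemma det_mxsub_perm p (s : 'S_p) (M : 'M[T]_p) : \det (mxsub s s M) = \det M.
Proof.
have -> : mxsub s s M = row_perm s (col_perm s M) by apply/matrixP => i j; rewrite !mxE.
rewrite row_permE col_permE !det_mulmx !det_perm odd_permV.
by rewrite [\det M * _]mulrC mulrA -expr2 sqrr_sign mul1r.
Qed.

Lemma det_mxsub_codom p q q' (M : 'M[T]_p) (f : 'I_q -> 'I_p) (g : 'I_q' -> 'I_p) :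
  injective f -> injective g -> codom f =i codom g ->
  \det (mxsub f f M) = \det (mxsub g g M).
Proof.
move=> f_inj g_inj fg.
have eq_qq' : q = q'.
  rewrite -(card_ord q) -(card_ord q') -(card_codom f_inj) -(card_codom g_inj).
  exact: eq_card.
subst q'.
have g_onto i : {j | g j = f i}.
  apply: sig_eqW; have /codomP[j ->] : f i \in codom g by rewrite -fg codom_f.
  by exists j.
pose s0 i := sval (g_onto i).
have gs0 i : g (s0 i) = f i := svalP (g_onto i).
have s0_inj : injective s0 by move=> i j eq_ij; apply: f_inj; rewrite -!gs0 eq_ij.
have -> : mxsub f f M = mxsub (perm s0_inj) (perm s0_inj) (mxsub g g M).
  by apply/matrixP => i j; rewrite !mxE !permE !gs0.
exact: det_mxsub_perm.
Qed.

Definition principal_minor p (M : 'M[T]_p) (S : {set 'I_p}) : T :=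
  \det (mxsub (enum_val : 'I_#|S| -> 'I_p) (enum_val : 'I_#|S| -> 'I_p) M).

Lemma principal_minorE p (M : 'M[T]_p) (S : {set 'I_p}) q (f : 'I_q -> 'I_p) :
  injective f -> codom f =i S -> \det (mxsub f f M) = principal_minor M S.
Proof.
move=> f_inj fS; apply: det_mxsub_codom f_inj (@enum_val_inj _ _) _ => y.
by rewrite fS codom_enum_val.
Qed.

Lemma det_unit_rows_outside p (M : 'M[T]_p) (S : {set 'I_p}) :
  \det (\matrix_(i, j) if i \in S then M i j else (i == j)%:R) = principal_minor M S.
Proof.
set X := \matrix_(i, j) _.
(* Listing S before its complement makes X block upper triangular. *)
pose h (i : 'I_(#|S| + #|~: S|)) : 'I_p :=
  match split i with inl j => enum_val j | inr j => enum_val j end.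
have h_inj : injective h.
  rewrite /h => i j; case: split_ordP => i' ->; case: split_ordP => j' -> E.
  - by rewrite (enum_val_inj E).
  - by have := enum_valP j'; rewrite -E inE enum_valP.
  - by have := enum_valP i'; rewrite E inE enum_valP.
  - by rewrite (enum_val_inj E).
have h_onto : codom h =i codom id.
  move=> y; rewrite codom_f inj_card_onto //.
  by rewrite !card_ord cardsC card_ord.
rewrite -[X]mxsub_id -(det_mxsub_codom _ h_inj (@inj_id _) h_onto).
have -> : mxsub h h X =
    block_mx (mxsub enum_val enum_val M) (mxsub enum_val enum_val M) 0 1%:M.
  apply/matrixP => i j; rewrite mxE /h.
  case: split_ordP => i' ->; case: split_ordP => j' ->;
    rewrite ?block_mxEul ?block_mxEur ?block_mxEdl ?block_mxEdr !mxE.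
  - by rewrite enum_valP.
  - by rewrite enum_valP.
  - move: (enum_valP i') (enum_valP j'); rewrite inE => /negPf iS jS.
    by rewrite iS; case: eqP => // E; rewrite E jS in iS.
  - by move: (enum_valP i'); rewrite inE => /negPf ->; rewrite (inj_eq enum_val_inj).
by rewrite det_ublock det1 mulr1.
Qed.

Lemma prod_if_mem (I : finType) (S : {set I}) (F G : I -> T) :
  \prod_i (if i \in S then F i else G i) = (\prod_(i in S) F i) * \prod_(i in ~: S) G i.
Proof. by rewrite big_if; congr (_ * _); apply: eq_bigl => i; rewrite !inE. Qed.

Lemma det_diag_mul_add_diag p (u v : 'rV[T]_p) (M : 'M[T]_p) :
  \det (diag_mx u *m M + diag_mx v) =
  \sum_(S : {set 'I_p})
    (\prod_(i in S) u 0 i) * (\prod_(i in ~: S) v 0 i) * principal_minor M S.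
Proof.
transitivity (\sum_(s : 'S_p) (-1) ^+ s * \sum_(S : {set 'I_p})
    \prod_i (if i \in S then u 0 i * M i (s i) else v 0 i * (i == s i)%:R)).
  apply: eq_bigr => s _; congr (_ * _); rewrite -bigA_distr.
  by apply: eq_bigr => i _; rewrite mul_diag_mx !mxE mulr_natr.
under eq_bigr do rewrite mulr_sumr.
rewrite exchange_big; apply: eq_bigr => S _ /=.
rewrite -det_unit_rows_outside /(\det _) mulr_sumr; apply: eq_bigr => s _.
rewrite !prod_if_mem !big_split /=.
under [X in _ = _ * (_ * X)]eq_bigr do rewrite mxE.
by rewrite prod_if_mem mulrACA [LHS]mulrCA.
Qed.

Lemma prod_pad_left d m (S : {set 'I_m}) (F : 'I_(d + m) -> T) :
  \prod_(i in pad_left d S) F i =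
  (\prod_(j < d) F (lshift m j)) * \prod_(k in S) F (rshift d k).
Proof.
rewrite big_split_ord; congr (_ * _); apply: eq_bigl => i.
  by rewrite inE split_lshift.
by rewrite inE split_rshift.
Qed.

Lemma prod_setC_pad_left d m (S : {set 'I_m}) (F : 'I_(d + m) -> T) :
  \prod_(i in ~: pad_left d S) F i = \prod_(k in ~: S) F (rshift d k).
Proof.
rewrite big_split_ord big_pred0 => [|j]; last by rewrite !inE split_lshift.
by rewrite Monoid.mul1m; apply: eq_bigl => k; rewrite !inE split_rshift.
Qed.

Lemma det_lower_block_expand d m (N : 'M[T]_(d + m)) (a b : T) :
  \det (block_mx 1%:M 0 0 a%:M *m N + block_mx 0 0 0 b%:M) =
  \sum_(S : {set 'I_m}) a ^+ #|S| * b ^+ (m - #|S|) * principal_minor N (pad_left d S).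
Proof.
have -> : block_mx 1%:M 0 0 a%:M = diag_mx (row_mx (const_mx 1) (const_mx a)) :> 'M_(d + m).
  by rewrite diag_mx_row !diag_const_mx.
have -> : block_mx 0 0 0 b%:M = diag_mx (row_mx 0 (const_mx b)) :> 'M_(d + m).
  by rewrite diag_mx_row !diag_const_mx raddf0.
rewrite (det_diag_mul_add_diag (row_mx (const_mx 1) (const_mx a)) (row_mx 0 (const_mx b)) N).
pose unpad (S' : {set 'I_(d + m)}) := [set k | rshift d k \in S'].
have unpadK S : unpad (pad_left d S) = S by apply/setP => k; rewrite !inE split_rshift.
(* Only subsets containing the first d indices contribute: v vanishes there. *)
rewrite (bigID (fun S' => pad_left d (unpad S') == S')) /= [X in _ + X]big1 ?addr0.
  rewrite (reindex_onto (@pad_left d m) unpad) /=; last by move=> S' /eqP.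
  apply: eq_big => [S|S _]; first by rewrite unpadK !eqxx.
  rewrite prod_pad_left prod_setC_pad_left big1 ?mul1r => [|j _]; last by rewrite row_mxEl mxE.
  under eq_bigr do rewrite row_mxEr mxE.
  under [X in _ * X * _]eq_bigr do rewrite row_mxEr mxE.
  by rewrite !prodr_const [#|~: S|]cardsCs setCK card_ord.
move=> S' padS'.
have [j jS'] : exists j, lshift m j \notin S'.
  apply/existsP; apply: contraR padS' => /existsPn allS'.
  apply/eqP/setP => i; rewrite !inE; case: split_ordP => [j ->|k ->].
    by rewrite (negPn (allS' j)).
  by rewrite inE.
rewrite [X in _ * X * _](bigD1 (lshift m j)) ?inE //= row_mxEl mxE.
by rewrite mul0r mulr0 mul0r.
Qed.

End PrincipalMinors.

Section ShiftedGram.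
Variable T : comNzRingType.

Lemma sylvester_det p q (x : T) (C : 'M[T]_(p, q)) (D : 'M[T]_(q, p)) :
  x ^+ q * \det (x%:M - C *m D) = x ^+ p * \det (x%:M - D *m C).
Proof.
pose M := block_mx (x%:M : 'M_p) C D (1%:M : 'M_q).
have elimD : block_mx 1%:M (- C) 0 1%:M *m M = block_mx (x%:M - C *m D) 0 D 1%:M.
  by rewrite mulmx_block !mul1mx !mul0mx !add0r mulmx1 mulNmx subrr.
have elimC : block_mx 1%:M 0 (- D) x%:M *m M = block_mx x%:M C 0 (x%:M - D *m C).
  rewrite mulmx_block !mul1mx !mul0mx !addr0 mulNmx mul_scalar_mx mul_mx_scalar.
  by rewrite addNr mulmx1 mulNmx addrC.
move: (congr1 determinant elimD) (congr1 determinant elimC).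
rewrite !det_mulmx det_ublock det_lblock !det_ublock det_lblock !det1 !det_scalar !mul1r mulr1.
by move=> -> <-.
Qed.

Definition shifted_gram n d m (A : 'M[T]_(n, d)) (B : 'M[T]_(n, m)) (x : T) : 'M[T]_(d + m) :=
  block_mx x%:M 0 0 0 - col_mx A^T B^T *m row_mx A B.

Lemma shifted_gramE n d m (A : 'M[T]_(n, d)) (B : 'M[T]_(n, m)) x :
  shifted_gram A B x =
  block_mx (x%:M - A^T *m A) (- (A^T *m B)) (- (B^T *m A)) (- (B^T *m B)).
Proof. by rewrite /shifted_gram mul_col_row opp_block_mx add_block_mx !add0r. Qed.

Lemma principal_minor_shifted_gram n d m (A : 'M[T]_(n, d)) (B : 'M[T]_(n, m)) x
    (S : {set 'I_m}) :
  principal_minor (shifted_gram A B x) (pad_left d S) =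
  \det (shifted_gram A (colsub (enum_val : 'I_#|S| -> 'I_m) B) x).
Proof.
set f := @pad_left_enum d m S.
have colsub_f : colsub f (row_mx A B) = row_mx A (colsub enum_val B).
  apply/matrixP => i j; rewrite mxE /f /pad_left_enum; case: (split_ordP j) => [j' ->|k ->].
    by rewrite !row_mxEl.
  by rewrite !row_mxEr mxE.
have mxsub_f : mxsub f f (block_mx x%:M 0 0 0) = block_mx x%:M 0 0 0.
  apply/matrixP => i j; rewrite mxE /f /pad_left_enum.
  case: (split_ordP i) => [i' ->|k ->]; case: (split_ordP j) => [j' ->|l ->];
    by rewrite ?block_mxEul ?block_mxEur ?block_mxEdl ?block_mxEdr ?mxE.
rewrite -(principal_minorE _ (@pad_left_enum_inj d m S) (@codom_pad_left_enum d m S)).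
rewrite /shifted_gram raddfB /= mxsub_mul -!tr_row_mx -trmx_mxsub.
by rewrite colsub_f mxsub_f.
Qed.

Lemma shifted_gram_add_block n d m (A : 'M[T]_(n, d)) (B : 'M[T]_(n, m)) x y :
  shifted_gram A B x + block_mx 0 0 0 y%:M =
  block_mx x%:M 0 0 y%:M - col_mx A^T B^T *m row_mx A B.
Proof. by rewrite /shifted_gram addrAC add_block_mx !addr0 add0r. Qed.

Lemma shifted_gram_scale_rows n d m (A : 'M[T]_(n, d)) (B : 'M[T]_(n, m)) x a :
  block_mx 1%:M 0 0 a%:M *m shifted_gram A B x + block_mx 0 0 0 x%:M =
  x%:M - col_mx A^T (a *: B^T) *m row_mx A B.
Proof.
rewrite /shifted_gram mulmxBr mulmx_block mulmxA mul_block_col.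
rewrite !mul1mx !mul0mx !mulmx0 !addr0 !add0r mul_scalar_mx.
by rewrite addrAC add_block_mx !addr0 add0r -scalar_mx_block.
Qed.

End ShiftedGram.

Lemma principal_minor_map (T U : comNzRingType) (phi : {rmorphism T -> U}) p
    (M : 'M[T]_p) (S : {set 'I_p}) :
  principal_minor (map_mx phi M) S = phi (principal_minor M S).
Proof. by rewrite /principal_minor -map_mxsub det_map_mx. Qed.

Lemma map_shifted_gram (T U : comNzRingType) (f : {rmorphism T -> U}) n d m
    (A : 'M[T]_(n, d)) (B : 'M[T]_(n, m)) x :
  map_mx f (shifted_gram A B x) = shifted_gram (map_mx f A) (map_mx f B) (f x).
Proof.
rewrite /shifted_gram map_mxB map_block_mx map_scalar_mx !raddf0.
by rewrite map_mxM map_col_mx map_row_mx !map_trmx.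
Qed.

Lemma det_block_schur (T : comUnitRingType) p q (A : 'M[T]_p) (B : 'M[T]_(p, q))
    (C : 'M[T]_(q, p)) (D : 'M[T]_q) :
  D \in unitmx -> \det (block_mx A B C D) = \det D * \det (A - B *m invmx D *m C).
Proof.
move=> D_unit.
have -> : block_mx A B C D =
    block_mx 1%:M (B *m invmx D) 0 1%:M *m block_mx (A - B *m invmx D *m C) 0 C D.
  by rewrite mulmx_block !mul1mx !mul0mx !add0r subrK -mulmxA mulVmx // mulmx1.
by rewrite det_mulmx det_ublock det_lblock !det1 !mul1r mulrC.
Qed.

Lemma invmxN (T : comUnitRingType) p (M : 'M[T]_p) : invmx (- M) = - invmx M.
Proof.
rewrite -!scaleN1r; have [M_unit|M_sing] := boolP (M \in unitmx).
  by rewrite invmxZ ?unitmxZ ?unitrN1 // invrN1.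
by rewrite !invmx_out ?inE ?unitmxZ ?unitrN1.
Qed.

Lemma mulmx_trmx_eq0 (R : realDomainType) n (u : 'rV[R]_n) : u *m u^T = 0 -> u = 0.
Proof.
move=> /matrixP/(_ 0 0); rewrite !mxE => /eqP.
under eq_bigr do rewrite mxE -expr2.
rewrite psumr_eq0 => [/allP u0|i _]; last exact: sqr_ge0.
apply/rowP => i; rewrite mxE.
by move: (u0 i (mem_index_enum i)); rewrite implyTb sqrf_eq0 => /eqP.
Qed.

Lemma horner0_derivn (T : nzRingType) (p : {poly T}) j : (p^`(j)).[0] = p`_j * j`!%:R.
Proof. by rewrite horner_coef0 coef_derivn addn0 ffactnn mulr_natr. Qed.

Lemma coef_sum_polyC_mulXn (T : nzRingType) (I : finType) (c : I -> T) (e : I -> nat) j :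
  (\sum_i (c i)%:P * 'X^(e i))`_j = \sum_(i | e i == j) c i.
Proof.
rewrite coef_sum [RHS]big_mkcond; apply: eq_bigr => i _.
by rewrite coefCM coefXn eq_sym; case: eqP; rewrite ?mulr1 ?mulr0.
Qed.

Section RealGram.
Variable R : realType.

Lemma mp_pinv_full_col n q (W : 'M[R]_(n, q)) :
  W^T *m W \in unitmx -> mp_pinv W = invmx (W^T *m W) *m W^T.
Proof.
move=> G_unit; set Gi := invmx (W^T *m W).
have GiG : Gi *m (W^T *m W) = 1%:M := mulVmx G_unit.
have Gi_sym : Gi^T = Gi by rewrite trmx_inv trmx_mul trmxK.
have : penrose W (Gi *m W^T).
  split.
  - by rewrite -mulmxA -(mulmxA Gi) GiG mulmx1.
  - by rewrite -(mulmxA _ W^T W) GiG mul1mx.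
  - by rewrite !trmx_mul trmxK Gi_sym mulmxA.
  - by rewrite -mulmxA GiG trmx1.
move=> /(ex_intro (penrose W)) /(epsilon_spec (inhabits 0)).
rewrite -/(mp_pinv W); set X := mp_pinv W; case=> WXW _ WX_sym _.
have GX : W^T *m W *m X = W^T by rewrite -mulmxA -WX_sym -trmx_mul WXW.
by rewrite -[X]mul1mx -GiG -mulmxA GX.
Qed.

Lemma det_shifted_gram_singular n d q (A : 'M[R]_(n, d)) (W : 'M[R]_(n, q)) x :
  \det (W^T *m W) = 0 -> \det (shifted_gram A W x) = 0.
Proof.
move/eqP/det0P => [v v_neq0 vG0].
have vWT0 : v *m W^T = 0.
  by apply: mulmx_trmx_eq0; rewrite trmx_mul trmxK mulmxA -(mulmxA v) vG0 mul0mx.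
apply/eqP/det0P; exists (row_mx 0 v); first by rewrite row_mx_eq0 negb_and v_neq0 orbT.
rewrite shifted_gramE mul_row_block !mul0mx !add0r !mulmxN !mulmxA vWT0.
by rewrite !mul0mx !oppr0 row_mx0.
Qed.

Lemma det_shifted_gram n d q (A : 'M[R]_(n, d)) (W : 'M[R]_(n, q)) x :
  \det (shifted_gram A W x) =
  (-1) ^+ q * (\det (W^T *m W) * \det (x%:M - A^T *m (1%:M - W *m mp_pinv W) *m A)).
Proof.
have [G_unit|] := boolP (W^T *m W \in unitmx); last first.
  rewrite unitmxE unitfE negbK => /eqP G0.
  by rewrite det_shifted_gram_singular // G0 mul0r mulr0.
rewrite shifted_gramE det_block_schur; last by rewrite -scaleN1r unitmxZ ?unitrN1.
rewrite mp_pinv_full_col // invmxN -[- (W^T *m W)]scaleN1r detZ -mulrA.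
congr (_ * (_ * \det _)).
rewrite mulmxN !mulNmx opprK mulmxBr mulmx1 mulmxBl opprB addrA !mulmxA.
by rewrite mulmxN !mulNmx opprK addrAC.
Qed.

Lemma Pk_principal_minors n d m k (A : 'M[R]_(n, d)) (B : 'M[R]_(n, m)) x :
  Pk k A B x =
  (-1) ^+ k * \sum_(S : {set 'I_m} | #|S| == k)
                principal_minor (shifted_gram A B x) (pad_left d S).
Proof.
rewrite /Pk mulr_sumr; apply: eq_bigr => S /eqP <-.
by rewrite principal_minor_shifted_gram det_shifted_gram signrMK.
Qed.

Lemma detBlockY_minors n d m (A : 'M[R]_(n, d)) (B : 'M[R]_(n, m)) x :
  detBlockY A B x = \sum_(S : {set 'I_m})
    (principal_minor (shifted_gram A B x) (pad_left d S))%:P * 'X^(m - #|S|).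
Proof.
rewrite /detBlockY map_mxM map_col_mx map_row_mx -!map_trmx -shifted_gram_add_block.
rewrite -map_shifted_gram -[X in X + _]mul1mx scalar_mx_block det_lower_block_expand.
by apply: eq_bigr => S _; rewrite expr1n mul1r principal_minor_map mulrC.
Qed.

Lemma detNY_minors n d m (A : 'M[R]_(n, d)) (B : 'M[R]_(n, m)) x :
  x%:P ^+ (d + m) * detNY A B x = x%:P ^+ n * \sum_(S : {set 'I_m})
    (x ^+ (m - #|S|) * principal_minor (shifted_gram A B x) (pad_left d S))%:P * 'X^#|S|.
Proof.
pose C := row_mx (map_mx polyC A) (map_mx polyC B).
pose D := col_mx (map_mx polyC A)^T ('X *: (map_mx polyC B)^T).
have -> : detNY A B x = \det ((x%:P)%:M - C *m D).
  rewrite /detNY /C /D mul_row_col -scalemxAr !map_trmx -!map_mxM.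
  by rewrite map_mxB map_scalar_mx opprD addrA /=.
rewrite sylvester_det -shifted_gram_scale_rows -map_shifted_gram det_lower_block_expand.
congr (_ * _); apply: eq_bigr => S _.
by rewrite principal_minor_map polyCM polyC_exp -mulrA mulrC.
Qed.

Lemma Pk_detBlockY n d m k (A : 'M[R]_(n, d)) (B : 'M[R]_(n, m)) x : (k <= m)%N ->
  Pk k A B x = (-1) ^+ k / ((m - k)`!)%:R * ((detBlockY A B x)^`(m - k)).[0].
Proof.
move=> le_km; have fact_neq0 : ((m - k)`!)%:R != 0 :> R by rewrite pnatr_eq0 -lt0n fact_gt0.
rewrite horner0_derivn detBlockY_minors coef_sum_polyC_mulXn Pk_principal_minors.
rewrite [RHS]mulrAC -[RHS]mulrA mulfK //; congr (_ * _); apply: eq_bigl => S.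
by have := max_card S; rewrite card_ord => ?; apply/eqP/eqP; lia.
Qed.

Lemma Pk_detNY n d m k (A : 'M[R]_(n, d)) (B : 'M[R]_(n, m)) x : (k <= m)%N -> x != 0 ->
  Pk k A B x = (-1) ^+ k / (k`!)%:R * x ^ (d%:Z - n%:Z + k%:Z) * ((detNY A B x)^`(k)).[0].
Proof.
move=> le_km x_neq0; have fact_neq0 : (k`!)%:R != 0 :> R by rewrite pnatr_eq0 -lt0n fact_gt0.
rewrite horner0_derivn Pk_principal_minors.
set q := detNY A B x; set s := \sum_(S | _) _.
have q_k : x ^+ (d + m) * q`_k = x ^+ (n + (m - k)) * s.
  move/(congr1 (fun p : {poly R} => p`_k)): (detNY_minors A B x).
  rewrite -!polyC_exp !coefCM coef_sum_polyC_mulXn => ->.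
  rewrite exprD -mulrA; congr (_ * _).
  by rewrite /s mulr_sumr; apply: eq_bigr => S /eqP ->.
have x_pow : x ^+ (n + (m - k)) * x ^ (d%:Z - n%:Z + k%:Z) = x ^+ (d + m).
  by rewrite !exprnP -expfzDr //; congr (x ^ _); lia.
suff -> : s = x ^ (d%:Z - n%:Z + k%:Z) * q`_k.
  by rewrite (mulrC q`_k) [_ / _ * _]mulrAC [RHS]mulrA mulfVK // mulrA.
apply: (mulfI (expf_neq0 (n + (m - k)) x_neq0)).
by rewrite mulrA x_pow q_k.
Qed.

End RealGram.

Theorem proposition3p4 (R : realType) (n d dB : nat)
  (A : 'M[R]_(n, d)) (B : 'M[R]_(n, dB)) (k : nat) :
  (k <= \rank B)%N ->
  (forall x : R,
     Pk k A B x = (-1) ^+ k / ((dB - k)`!)%:R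
                  * ((detBlockY A B x)^`(dB - k)).[0]) /\
  (forall x : R, x != 0 ->
     Pk k A B x = (-1) ^+ k / (k`!)%:R
                  * x ^ (d%:Z - n%:Z + k%:Z)
                  * ((detNY A B x)^`(k)).[0]).
Proof.
move=> le_k_rank; have le_k_dB := leq_trans le_k_rank (rank_leq_col B).
by split=> x; [exact: Pk_detBlockY | exact: Pk_detNY].
Qed.
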